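(* Let $(X,\phi)$ be a ranked convex geometry with critical base $\Sigma$, and let $j\in X$. Let $\mathrm{pred}(j)=\{a\in X:\exists A\to j\in\Sigma,\ a\in A\}$ and let $\mathcal{H}_j$ be the hypergraph with vertex set $X\setminus\bigcap_{M\in j^{\nearrow}}M$ and edge set $\{X\setminus M: M\in j^{\nearrow}\}$. Then a set $A\subseteq X$ is a critical minimal generator of $j$ if and only if $A\in Tr(\mathcal{H}_j[\mathrm{pred}(j)])$.
   Context: $X$ is finite. A closure operator $\phi$ on $X$ is extensive, monotone and idempotent; $(X,\phi)$ is standard if $\phi(\emptyset)=\emptyset$ and $\phi(\{x\})\setminus\{x\}$ is closed for all $x$. A unit implicational base $\Sigma$ (implications $A\to b$, $A\subseteq X$, $b\in X$) is an implicational base of $(X,\phi)$ if its closed sets (sets $S$ with $A\not\subseteq S$ or $b\in S$ for each $A\to b\in\Sigma$) are exactly the closed sets of $\phi$. $\Sigma$ is ranked if there is $\rho:X\to\mathbb{N}$ with $\rho(a)=\rho(b)+1$ whenever $A\to b\in\Sigma$ and $a\in A$. A ranked convex geometry is a standard closure space admitting a ranked implicational base. $A$ is a minimal generator of $b$ if $b\in\phi(A)$ and $b\notin\phi(A\setminus\{x\})$ for all $x\in A$. The critical base is the unique irredundant implicational base all of whose implications $A\to b$ have $A$ a minimal generator of $b$; a minimal generator $A$ of $b$ is critical if $A\to b$ belongs to the critical base. For $j\in X$, $j^{\nearrow}$ is the set of inclusion-maximal closed sets not containing $j$. For a hypergraph $\mathcal{H}$ and $S\subseteq V(\mathcal{H})$,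 the induced hypergraph $\mathcal{H}[S]$ has vertex set $S$ and edge set $\{E\cap S: E\in\mathcal{E}(\mathcal{H})\}$; $Tr(\mathcal{H})$ is the set of inclusion-minimal vertex sets intersecting every edge. *)

From mathcomp Require Import all_boot.
Set Implicit Arguments. Unset Strict Implicit. Unset Printing Implicit Defensive.

Section Defs.
Variable T : finType.

Definition closure_op (phi : {set T} -> {set T}) : Prop :=
  [/\ forall A : {set T}, A \subset phi A,
      forall A B : {set T}, A \subset B -> phi A \subset phi B &
      forall A : {set T}, phi (phi A) = phi A].

Definition phi_closed (phi : {set T} -> {set T}) (S : {set T}) : bool :=
  phi S == S.

Definition standard (phi : {set T} -> {set T}) : Prop :=
  closure_op phi /\ phi set0 = set0 /\
  forall x : T, phi_closed phi (phi [set x] :\ x).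

(* unit implications A -> b are pairs (A, b) *)
Definition impl := ({set T} * T)%type.

Definition sigma_closed (Sigma : {set impl}) (S : {set T}) : bool :=
  [forall p in Sigma, ~~ (p.1 \subset S) || (p.2 \in S)].

Definition is_base (phi : {set T} -> {set T}) (Sigma : {set impl}) : Prop :=
  forall S : {set T}, sigma_closed Sigma S = phi_closed phi S.

Definition ranked (Sigma : {set impl}) : Prop :=
  exists rho : T -> nat,
    forall p, p \in Sigma -> forall a, a \in p.1 -> rho a = (rho p.2).+1.

Definition ranked_convex_geometry (phi : {set T} -> {set T}) : Prop :=
  standard phi /\ exists Sigma, is_base phi Sigma /\ ranked Sigma.

Definition min_gen (phi : {set T} -> {set T}) (A : {set T}) (b : T) : Prop :=
  b \in phi A /\ forall x, x \in A -> b \notin phi (A :\ x).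

Definition irredundant_base (phi : {set T} -> {set T}) (Sigma : {set impl}) : Prop :=
  is_base phi Sigma /\ forall p, p \in Sigma -> ~ is_base phi (Sigma :\ p).

(* the critical base (unique, by the paper) *)
Definition critical_base (phi : {set T} -> {set T}) (Sigma : {set impl}) : Prop :=
  irredundant_base phi Sigma /\ forall p, p \in Sigma -> min_gen phi p.1 p.2.

Definition critical_min_gen (phi : {set T} -> {set T}) (Sigma : {set impl})
    (A : {set T}) (b : T) : Prop :=
  min_gen phi A b /\ (A, b) \in Sigma.

Definition up_j (phi : {set T} -> {set T}) (j : T) : {set {set T}} :=
  [set M | maxset (fun M : {set T} => phi_closed phi M && (j \notin M)) M].

Definition pred_j (Sigma : {set impl}) (j : T) : {set T} :=
  [set a | [exists p in Sigma, (p.2 == j) && (a \in p.1)]].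

Record hypergraph := Hypergraph { hV : {set T}; hE : {set {set T}} }.

Definition H_j (phi : {set T} -> {set T}) (j : T) : hypergraph :=
  Hypergraph (~: \bigcap_(M in up_j phi j) M)
             [set ~: M | M in up_j phi j].

Definition induced (H : hypergraph) (S : {set T}) : hypergraph :=
  Hypergraph S [set E :&: S | E in hE H].

Definition is_transversal (H : hypergraph) (A : {set T}) : bool :=
  (A \subset hV H) && [forall E in hE H, A :&: E != set0].

Definition Tr (H : hypergraph) : {set {set T}} :=
  [set A | minset (is_transversal H) A].

End Defs.

From Pilot Require Import Defs.
From mathcomp Require Import all_boot.
Set Implicit Arguments. Unset Strict Implicit. Unset Printing Implicit Defensive.

(* A set A meets every edge X \ M, M in j^nearrow, exactly when A lies in no closed set
   avoiding j, i.e. when j is in phi A. So the minimal transversals of H_j[pred j] are the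
   minimal generators of j inside pred j, and it remains to see that such a generator A is
   critical. The key fact is that the critical base is ranked by any ranking rho of an
   implicational base; hence A lies in the single rank rho j + 1. Closing a set of a single
   rank k creates no new elements of rank >= k, so the critical implication E -> j that
   fires inside phi A has E included in A, and minimality of A forces E = A. *)

Section ClosureSpace.
Variables (T : finType) (phi : {set T} -> {set T}).
Hypothesis phi_closure : closure_op phi.

Lemma closure_ext (A : {set T}) : A \subset phi A.
Proof. by case: phi_closure. Qed.

Lemma closure_mono (A B : {set T}) : A \subset B -> phi A \subset phi B.
Proof. by case: phi_closure => _ + _; apply. Qed.

Lemma closed_closure (A : {set T}) : phi_closed phi (phi A).
Proof. by case: phi_closure => _ _ idem; rewrite /phi_closed idem. Qed.

Lemma closure_min (A M : {set T}) :
  phi_closed phi M -> A \subset M -> phi A \subset M.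
Proof. by move=> /eqP {2}<-; apply: closure_mono. Qed.

Section Implications.
Variable Sig : {set impl T}.

Lemma sigma_closedD1 (p : impl T) (S : {set T}) : p \in Sig ->
  sigma_closed Sig S = sigma_closed (Sig :\ p) S && (~~ (p.1 \subset S) || (p.2 \in S)).
Proof.
move=> pSig; apply/forallP/andP => [closedS | [/forallP closedS fire_p] q].
  split; last exact: implyP (closedS p) pSig.
  by apply/forallP => q; apply/implyP => /setD1P[_]; apply/implyP/closedS.
apply/implyP => qSig; have [-> //| neq_qp] := eqVneq q p.
by have := closedS q; rewrite !inE neq_qp qSig.
Qed.

Lemma irredundant_nontrivial (p : impl T) :
  irredundant_base phi Sig -> p \in Sig -> p.2 \notin p.1.
Proof.
move=> [Sig_base Sig_irr] pSig; apply/negP => p_trivial; apply: (Sig_irr p pSig) => S.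
rewrite -Sig_base (sigma_closedD1 _ pSig); case: sigma_closed => //=.
by case: (boolP (p.1 \subset S)) => // /subsetP/(_ _ p_trivial) ->.
Qed.

Lemma irredundant_separating (p : impl T) :
  irredundant_base phi Sig -> p \in Sig ->
  exists S : {set T}, [/\ p.1 \subset S, p.2 \notin S & sigma_closed (Sig :\ p) S].
Proof.
move=> [Sig_base Sig_irr] pSig.
have /existsP[S] : [exists S : {set T}, sigma_closed (Sig :\ p) S != phi_closed phi S].
  apply: contraT => /existsPn same; exfalso; apply: (Sig_irr p pSig) => S.
  by move: (same S) => /negPn/eqP.
rewrite -Sig_base (sigma_closedD1 _ pSig).
have [closedS|] := boolP (sigma_closed _ S); last by rewrite eq_refl.
have [p1S|] := boolP (p.1 \subset S); last by rewrite eq_refl.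
by rewrite orbC; case: (boolP (p.2 \in S)) => // p2S _; exists S.
Qed.

Lemma premise_sub_pred_j (A : {set T}) (j : T) :
  (A, j) \in Sig -> A \subset pred_j Sig j.
Proof.
move=> AjSig; apply/subsetP => a aA; rewrite inE.
by apply/existsP; exists (A, j); rewrite AjSig eqxx.
Qed.

Hypothesis Sig_base : is_base phi Sig.

Lemma base_closedP (S : {set T}) :
  reflect (forall p, p \in Sig -> p.1 \subset S -> p.2 \in S) (phi_closed phi S).
Proof.
rewrite -Sig_base; apply: (iffP forallP) => [closedS p pSig p1S | fireS p].
  by have := closedS p; rewrite pSig p1S.
by apply/implyP => pSig; case: (boolP (p.1 \subset S)) => //= /(fireS p pSig).
Qed.

Lemma base_closure_witness (B : {set T}) (b : T) :
  b \in phi B -> b \notin B -> exists2 C, (C, b) \in Sig & C \subset phi B :\ b.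
Proof.
move=> b_phiB b_notB.
have : ~~ sigma_closed Sig (phi B :\ b).
  rewrite Sig_base; apply: contraL b_phiB => closedD1.
  have B_sub : B \subset phi B :\ b by rewrite subsetD1 closure_ext.
  by apply/negP => /(subsetP (closure_min closedD1 B_sub)); rewrite !inE eqxx.
case/forallPn => p; rewrite negb_imply negb_or negbK => /andP[pSig /andP[p1_sub p2_notin]].
have p2_phiB : p.2 \in phi B.
  have /base_closedP fire_phiB := closed_closure B.
  by apply: fire_phiB pSig _; apply: subset_trans p1_sub (subD1set _ _).
have p2b : p.2 = b by apply/eqP; move: p2_notin; rewrite !inE p2_phiB andbT negbK.
by exists p.1; rewrite // -p2b -surjective_pairing.
Qed.

End Implications.

Section Ranked.
Variables (Sig : {set impl T}) (rho : T -> nat).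
Hypothesis Sig_base : is_base phi Sig.
Hypothesis Sig_ranked :
  forall p, p \in Sig -> forall a, a \in p.1 -> rho a = (rho p.2).+1.
Hypothesis phi0 : phi set0 = set0.

Lemma base_premise_neq0 (p : impl T) : p \in Sig -> p.1 != set0.
Proof.
move=> pSig; apply/negP => /eqP p1_0.
have /(base_closedP Sig_base) fire0 : phi_closed phi set0 by rewrite /phi_closed phi0.
by have := fire0 p pSig; rewrite p1_0 sub0set inE => /(_ isT).
Qed.

Lemma closure_layer (Y : {set T}) (k : nat) : {in Y, forall y, rho y = k} ->
  forall x, x \in phi Y -> k <= rho x -> x \in Y.
Proof.
move=> rhoY x x_phiY k_le_x.
have closedZ : phi_closed phi (Y :|: [set z | rho z < k]).
  apply/(base_closedP Sig_base) => p pSig p1_sub; rewrite !inE.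
  have [|k_le_p2] := ltnP (rho p.2) k; first by rewrite orbT.
  have /set0Pn[a a_p1] := base_premise_neq0 pSig.
  have rho_a := Sig_ranked pSig a_p1.
  have := subsetP p1_sub a a_p1; rewrite !inE rho_a ltnNge (leqW k_le_p2) /= orbF.
  by move=> /rhoY ak; move: k_le_p2; rewrite -ak rho_a ltnn.
have := subsetP (closure_min closedZ (subsetUl _ _)) x x_phiY.
by rewrite !inE ltnNge k_le_x orbF.
Qed.

Lemma closure_rank_ge (S : {set T}) (k : nat) (x : T) :
  x \in phi S -> k <= rho x -> x \in phi [set y in S | k <= rho y].
Proof.
move=> x_phiS k_le_x; set Sk := [set y in S | k <= rho y].
have closedZ : phi_closed phi (phi Sk :|: [set z | rho z < k]).
  apply/(base_closedP Sig_base) => p pSig p1_sub; rewrite !inE.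
  have [|k_le_p2] := ltnP (rho p.2) k; first by rewrite orbT.
  have /(base_closedP Sig_base) fire_phiSk := closed_closure Sk.
  rewrite (fire_phiSk p pSig) //; apply/subsetP => a a_p1.
  have := subsetP p1_sub a a_p1; rewrite !inE (Sig_ranked pSig a_p1).
  by rewrite ltnNge (leqW k_le_p2) orbF.
have S_sub : S \subset phi Sk :|: [set z | rho z < k].
  apply/subsetP => y yS; rewrite !inE; have [|k_le_y] := ltnP (rho y) k; first by rewrite orbT.
  by rewrite (subsetP (closure_ext Sk)) // !inE yS.
have := subsetP (closure_min closedZ S_sub) x x_phiS.
by rewrite !inE ltnNge k_le_x orbF.
Qed.

Lemma min_gen_rank (B : {set T}) (b : T) :
  min_gen phi B b -> b \notin B -> {in B, forall x, rho b < rho x}.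
Proof.
move=> [b_phiB minB] b_notB x xB; rewrite ltnNge; apply/negP => x_le_b.
have [C CSig C_sub] := base_closure_witness Sig_base b_phiB b_notB.
set B' := [set y in B | (rho b).+1 <= rho y].
have C_sub' : C \subset phi B'.
  apply/subsetP => c cC; apply: closure_rank_ge; last by rewrite (Sig_ranked CSig cC).
  by have := subsetP C_sub c cC; rewrite inE => /andP[].
have /(base_closedP Sig_base) fire_phiB' := closed_closure B'.
apply: (negP (minB x xB)); apply: (subsetP (closure_mono _)) (fire_phiB' _ CSig C_sub').
apply/subsetP => y; rewrite !inE => /andP[yB b_lt_y]; rewrite yB andbT.
by apply: contraTneq b_lt_y => ->; rewrite -leqNgt.
Qed.

Section Critical.
Variable Sigma : {set impl T}.
Hypothesis Sigma_critical : critical_base phi Sigma.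

Let Sigma_irredundant : irredundant_base phi Sigma := proj1 Sigma_critical.
Let Sigma_base : is_base phi Sigma := proj1 Sigma_irredundant.

Lemma critical_rank_lt (q : impl T) (a : T) : q \in Sigma -> a \in q.1 -> rho q.2 < rho a.
Proof.
move=> qSigma; apply: min_gen_rank; first exact: (proj2 Sigma_critical q qSigma).
exact: irredundant_nontrivial Sigma_irredundant qSigma.
Qed.

Lemma critical_premise_in_layer (Y : {set T}) (b : T) :
  {in Y, forall y, rho y = (rho b).+1} -> b \in phi Y ->
  exists2 E, (E, b) \in Sigma & E \subset Y.
Proof.
move=> rhoY b_phiY; have b_notY : b \notin Y by apply/negP => /rhoY/n_Sn.
have [E ESigma E_sub] := base_closure_witness Sigma_base b_phiY b_notY.
exists E => //; apply/subsetP => e eE.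
apply: (closure_layer rhoY); first by have := subsetP E_sub e eE; rewrite inE => /andP[].
exact: critical_rank_lt ESigma eE.
Qed.

Lemma critical_low_rank_closed (B S : {set T}) (b : T) :
  (B, b) \in Sigma -> sigma_closed (Sigma :\ (B, b)) S ->
  phi_closed phi (S :|: [set z | rho z <= rho b]).
Proof.
move=> BbSigma closedS; apply/(base_closedP Sigma_base) => q qSigma q1_sub; rewrite !inE.
have [|b_lt_q2] := leqP (rho q.2) (rho b); first by rewrite orbT.
have q1S : q.1 \subset S.
  apply/subsetP => y yq1; have := subsetP q1_sub y yq1; rewrite !inE.
  by rewrite leqNgt (ltn_trans b_lt_q2 (critical_rank_lt qSigma yq1)) orbF.
have q_neq : q != (B, b) by apply: contraTneq b_lt_q2 => ->; rewrite ltnn.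
by move/forallP/(_ q): closedS; rewrite !inE q_neq qSigma q1S /= => ->.
Qed.

(* Irredundancy gives a set S containing B, avoiding b and closed under the other critical
   implications. Adding every element of rank <= rho b keeps S closed, so S contains the
   premise C of a ranked implication C -> b, which lies in rank rho b + 1. A critical
   implication E -> b with E inside C must then be B -> b itself, or it would put b into S. *)
Lemma critical_base_ranked :
  forall p, p \in Sigma -> forall a, a \in p.1 -> rho a = (rho p.2).+1.
Proof.
move=> [B b] BbSigma a aB /=.
have [S [BS b_notS closedS]] := irredundant_separating Sigma_irredundant BbSigma.
have b_phiB : b \in phi B := (proj2 Sigma_critical _ BbSigma).1.
have b_notB : b \notin B by apply: contraNN b_notS => /(subsetP BS).
have [C CSig C_sub] := base_closure_witness Sig_base b_phiB b_notB.
have rhoC : {in C, forall c, rho c = (rho b).+1} by move=> c /(Sig_ranked CSig).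
have CS : C \subset S.
  have closedZ := critical_low_rank_closed BbSigma closedS.
  have phiB_sub := closure_min closedZ (subset_trans BS (subsetUl _ _)).
  apply/subsetP => c cC.
  have := subsetP phiB_sub c (subsetP (subset_trans C_sub (subD1set _ _)) c cC).
  by rewrite !inE rhoC // ltnn orbF.
have b_phiC : b \in phi C.
  have /(base_closedP Sig_base) fire_phiC := closed_closure C.
  exact: fire_phiC CSig (closure_ext C).
have [E EbSigma EC] := critical_premise_in_layer rhoC b_phiC.
have [E_B|E_neq] := eqVneq E B; first by rewrite rhoC // (subsetP EC) // E_B.
move/forallP/(_ (E, b)): closedS.
by rewrite !inE xpair_eqE (negbTE E_neq) EbSigma (subset_trans EC CS) /= (negbTE b_notS).
Qed.

Lemma min_gen_pred_critical (A : {set T}) (j : T) :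
  min_gen phi A j -> A \subset pred_j Sigma j -> (A, j) \in Sigma.
Proof.
move=> [j_phiA minA] A_pred.
have rhoA : {in A, forall a, rho a = (rho j).+1}.
  move=> a /(subsetP A_pred); rewrite inE => /existsP[q /and3P[qSigma /eqP <- aq]].
  exact: (critical_base_ranked qSigma aq).
have [E EjSigma EA] := critical_premise_in_layer rhoA j_phiA.
suff <- : E = A by [].
apply/eqP; rewrite eqEsubset EA; apply/subsetP => x xA; apply: contraT => x_notE.
have /(base_closedP Sigma_base) fire := closed_closure (A :\ x).
case/negP: (minA x xA); apply: fire EjSigma _.
by apply: subset_trans (closure_ext _); rewrite subsetD1 EA x_notE.
Qed.

End Critical.
End Ranked.

Lemma min_gen_minset (A : {set T}) (b : T) :
  min_gen phi A b <-> minset (fun B => b \in phi B) A.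
Proof.
split=> [[b_phiA minA] | /minsetP[b_phiA minA]].
  apply/minsetP; split=> // B b_phiB BA; apply/eqP; rewrite eqEsubset BA.
  apply/subsetP => x xA; apply: contraT => x_notB; case/negP: (minA x xA).
  by apply: (subsetP (closure_mono _)) b_phiB; rewrite subsetD1 BA x_notB.
split=> // x xA; apply/negP => b_phiAx.
by move/setP/(_ x): (minA _ b_phiAx (subD1set A x)); rewrite !inE eqxx xA.
Qed.

Lemma transversal_H_j (j : T) (P B : {set T}) :
  Defs.is_transversal (induced (H_j phi j) P) B = (B \subset P) && (j \in phi B).
Proof.
rewrite /Defs.is_transversal /=; case: (boolP (B \subset P)) => //= BP.
apply/forallP/idP => [meets | j_phiB E].
  apply: contraT => j_notphiB.
  have [M maxM phiB_sub] := maxset_exists (P := fun M => phi_closed phi M && (j \notin M))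
    (C := phi B) (introT andP (conj (closed_closure B) j_notphiB)).
  have edgeM : (~: M) :&: P \in [set E :&: P | E in [set ~: M | M in up_j phi j]].
    by apply/imsetP; exists (~: M) => //; apply/imsetP; exists M; rewrite ?inE.
  have /set0Pn[x] := implyP (meets _) edgeM; rewrite !inE => /and3P[xB x_notM _].
  by rewrite (subsetP phiB_sub) ?(subsetP (closure_ext B)) in x_notM.
apply/implyP => /imsetP[_ /imsetP[M Mup ->] ->]; apply: contraT; rewrite negbK.
move: Mup; rewrite inE => /maxsetp/andP[closedM j_notM] /eqP B_avoids.
have BM : B \subset M.
  apply/subsetP => x xB; apply: contraT => x_notM.
  by move/setP/(_ x): B_avoids; rewrite !inE xB x_notM (subsetP BP).
by rewrite (subsetP (closure_min closedM BM)) in j_notM.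
Qed.

Lemma Tr_H_j (j : T) (P A : {set T}) :
  (A \in Tr (induced (H_j phi j) P)) = (A \subset P) && minset (fun B => j \in phi B) A.
Proof.
rewrite inE (minset_eq _ (transversal_H_j j P)).
apply/minsetP/andP => [[/andP[AP j_phiA] minA] | [AP /minsetP[j_phiA minA]]].
  split=> //; apply/minsetP; split=> // B j_phiB BA.
  by apply: minA => //; rewrite (subset_trans BA AP).
split=> [|B /andP[_ j_phiB]]; [exact/andP | exact: minA].
Qed.

End ClosureSpace.

Theorem theorem5 (T : finType) (phi : {set T} -> {set T}) (Sigma : {set impl T})
  (j : T) :
  ranked_convex_geometry phi ->
  critical_base phi Sigma ->
  forall A : {set T},
    critical_min_gen phi Sigma A j <->
    A \in Tr (induced (H_j phi j) (pred_j Sigma j)).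
Proof.
move=> [[phi_closure [phi0 _]] [Sig [Sig_base [rho Sig_ranked]]]] Sigma_critical A.
rewrite (Tr_H_j phi_closure).
split=> [[mgA AjSigma] | /andP[A_pred /(min_gen_minset phi_closure) mgA]].
  by rewrite premise_sub_pred_j //=; apply/min_gen_minset.
split=> //; exact: (min_gen_pred_critical phi_closure Sig_base Sig_ranked phi0 Sigma_critical).
Qed.
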